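(* Let $G=(V,E)$ be an undirected graph (finite or infinite), $\widehat A$ a color class of $G$, and $X$ a partitive set of $G$ with $X\subsetneq\widetilde A$. Then there exists $a\in\widetilde A\setminus X$ such that $(a,x)\in\widehat A$ for every $x\in X$.
   Context: A graph $G=(V,E)$ has vertex set $V$ and edge set $E\subseteq V^2$; it is undirected if $E$ is irreflexive and symmetric. A set $X\subseteq V$ is a partitive set of $G$ if for all $a,b\in X$ and $c\in V\setminus X$: $(a,c)\in E\Leftrightarrow(b,c)\in E$ and $(c,a)\in E\Leftrightarrow(c,b)\in E$. Implication classes: on $E$ define $(a,b)\Gamma(a',b')$ iff either $a=a'$ and $(b,b')\notin E$, or $b=b'$ and $(a,a')\notin E$; the classes of the transitive closure $\Gamma^*$ are the implication classes. For an implication class $A$, $A^{-1}=\{(b,a):(a,b)\in A\}$ and the color class is $\widehat A=A\cup A^{-1}$. $\widetilde A$ denotes the set of vertices spanned by $\widehat A$ (vertices $a$ with $(a,b)\in\widehat A$ for some $b$). *)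

From Stdlib Require Import Relations.

Section Graphs.
Context {V : Type}.

Definition undirected (E : V -> V -> Prop) : Prop :=
  (forall a, ~ E a a) /\ (forall a b, E a b -> E b a).

Definition partitive (E : V -> V -> Prop) (X : V -> Prop) : Prop :=
  forall a b c, X a -> X b -> ~ X c ->
    (E a c <-> E b c) /\ (E c a <-> E c b).

Definition Gamma (E : V -> V -> Prop) (p q : V * V) : Prop :=
  E (fst p) (snd p) /\ E (fst q) (snd q) /\
  ((fst p = fst q /\ ~ E (snd p) (snd q)) \/
   (snd p = snd q /\ ~ E (fst p) (fst q))).

(* A is an implication class: an equivalence class of Γ* (on E). *)
Definition implication_class (E : V -> V -> Prop) (A : V * V -> Prop) : Prop :=
  exists e : V * V, E (fst e) (snd e) /\
    forall f, A f <-> (f = e \/ clos_trans (V * V) (Gamma E) e f).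

Definition color_class (A : V * V -> Prop) (p : V * V) : Prop :=
  A p \/ A (snd p, fst p).

Definition spanned (A : V * V -> Prop) (a : V) : Prop :=
  exists b, color_class A (a, b).

End Graphs.

From Stdlib Require Import Relations Classical ClassicalEpsilon.

(** The Γ-relation cannot leave the set of edges inside a partitive set X, so
    a colour class spanning a vertex outside X has no edge inside X.  Now fix
    x ∈ X and collapse all of X onto x.  This map preserves the edges that are
    not inside X and reflects all edges (an edge x–x would be a loop), hence
    it maps Γ-steps between such edges to Γ-steps.  As Â contains an edge at x
    that the collapse fixes, the collapse maps the implication class A into
    itself and sends any edge (a, x₀) ∈ Â with x₀ ∈ X to (a, x) ∈ Â. *)

Local Notation Gamma_rt E := (clos_refl_trans _ (Gamma E)).

Lemma color_class_swap {V : Type} (A : V * V -> Prop) (a b : V) :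
  color_class A (a, b) -> color_class A (b, a).
Proof. unfold color_class; simpl; tauto. Qed.

Section ImplicationClass.
Context {V : Type} (E : V -> V -> Prop).
Hypothesis E_sym : forall a b, E a b -> E b a.

Lemma Gamma_sym p q : Gamma E p q -> Gamma E q p.
Proof.
  destruct p as [a b], q as [c d]; unfold Gamma; simpl.
  intros [Hab [Hcd [[-> Hbd] | [-> Hac]]]]; repeat split; auto;
    [left | right]; split; auto.
Qed.

Lemma Gamma_rt_sym p q : Gamma_rt E p q -> Gamma_rt E q p.
Proof.
  induction 1.
  - apply rt_step, Gamma_sym; assumption.
  - apply rt_refl.
  - eapply rt_trans; eassumption.
Qed.

Variable A : V * V -> Prop.
Hypothesis A_class : implication_class E A.

Lemma implication_class_Gamma_closed p q : A p -> Gamma E p q -> A q.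
Proof.
  destruct A_class as [e [_ HA]]; rewrite !HA.
  intros [-> | Hep] Hpq; right.
  - apply t_step; assumption.
  - eapply t_trans; [eassumption | apply t_step; assumption].
Qed.

Lemma implication_class_connected p q : A p -> A q -> Gamma_rt E p q.
Proof.
  destruct A_class as [e [_ HA]].
  assert (from_e : forall f, A f -> Gamma_rt E e f).
  { intros f; rewrite HA; intros [-> | Hef]; [apply rt_refl | apply clos_t_clos_rt; assumption]. }
  intros Ap Aq; apply rt_trans with e; [apply Gamma_rt_sym |]; auto.
Qed.

End ImplicationClass.

Section Partitive.
Context {V : Type} (E : V -> V -> Prop) (X : V -> Prop).
Hypotheses (E_irrefl : forall a, ~ E a a) (E_sym : forall a b, E a b -> E b a).
Hypothesis X_partitive : partitive E X.

Definition within (p : V * V) : Prop := X (fst p) /\ X (snd p).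

Lemma partitive_edge_out a b c : X a -> X b -> ~ X c -> E a c -> E b c.
Proof. intros Xa Xb Xc; apply (X_partitive a b c Xa Xb Xc). Qed.

Lemma partitive_edge_in a b c : X a -> X b -> ~ X c -> E c a -> E c b.
Proof. intros Xa Xb Xc; apply (X_partitive a b c Xa Xb Xc). Qed.

Lemma Gamma_within p q : Gamma E p q -> within p -> within q.
Proof.
  destruct p as [a b], q as [c d]; unfold Gamma, within; simpl.
  intros [_ [Hcd [[<- Hbd] | [<- Hac]]]] [Xa Xb]; split; trivial;
    apply NNPP; intro Nout.
  - exact (Hbd (partitive_edge_out a b d Xa Xb Nout Hcd)).
  - exact (Hac (E_sym _ _ (partitive_edge_in b a c Xb Xa Nout Hcd))).
Qed.

Lemma Gamma_rt_within p q : Gamma_rt E p q -> within p -> within q.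
Proof.
  intros Hpq Wp; induction Hpq using clos_refl_trans_ind_left; eauto using Gamma_within.
Qed.

Lemma implication_class_within (A : V * V -> Prop) p q :
  implication_class E A -> A p -> A q -> within p -> within q.
Proof.
  intros A_class Ap Aq; apply Gamma_rt_within.
  exact (implication_class_connected E E_sym A A_class p q Ap Aq).
Qed.

Lemma color_class_not_within (A : V * V -> Prop) y :
  implication_class E A -> spanned A y -> ~ X y ->
  forall p, color_class A p -> ~ within p.
Proof.
  intros A_class [b Ayb] Xy [a c] Aac [Xa Xc].
  assert (all_within : forall q, A q -> within q).
  { intros q Aq; destruct Aac as [Aac | Aca];
      [apply (implication_class_within A (a, c)) | apply (implication_class_within A (c, a))];
      trivial; split; assumption. }
  destruct Ayb as [Ayb | Aby]; apply Xy; [apply (all_within _ Ayb) | apply (all_within _ Aby)].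
Qed.

Variables (x : V) (X_x : X x).

Definition collapse (v : V) : V :=
  if excluded_middle_informative (X v) then x else v.

Definition collapse_pair (p : V * V) : V * V :=
  (collapse (fst p), collapse (snd p)).

Lemma collapse_in v : X v -> collapse v = x.
Proof. unfold collapse; destruct excluded_middle_informative; tauto. Qed.

Lemma collapse_out v : ~ X v -> collapse v = v.
Proof. unfold collapse; destruct excluded_middle_informative; tauto. Qed.

Lemma collapse_reflects_edges u v : E (collapse u) (collapse v) -> E u v.
Proof.
  destruct (classic (X u)) as [Xu | Xu], (classic (X v)) as [Xv | Xv].
  - rewrite !collapse_in by assumption; intro Exx; destruct (E_irrefl x Exx).
  - rewrite collapse_in, collapse_out by assumption.
    apply partitive_edge_out; assumption.
  - rewrite collapse_out, collapse_in by assumption.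
    apply partitive_edge_in; assumption.
  - rewrite !collapse_out by assumption; trivial.
Qed.

Lemma collapse_preserves_edges u v :
  E u v -> ~ within (u, v) -> E (collapse u) (collapse v).
Proof.
  unfold within; simpl; intros Euv Nuv.
  destruct (classic (X u)) as [Xu | Xu], (classic (X v)) as [Xv | Xv].
  - tauto.
  - rewrite collapse_in, collapse_out by assumption.
    apply (partitive_edge_out u); assumption.
  - rewrite collapse_out, collapse_in by assumption.
    apply (partitive_edge_in v); assumption.
  - rewrite !collapse_out by assumption; assumption.
Qed.

Lemma Gamma_collapse p q : Gamma E p q -> ~ within p -> ~ within q ->
  Gamma E (collapse_pair p) (collapse_pair q).
Proof.
  destruct p as [a b], q as [c d]; unfold Gamma, collapse_pair; simpl.
  intros [Eab [Ecd Hstep]] Np Nq; split; [|split];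
    [apply collapse_preserves_edges; assumption ..|].
  destruct Hstep as [[-> Nbd] | [-> Nac]]; [left | right];
    split; auto using collapse_reflects_edges.
Qed.

Lemma implication_class_collapse (A : V * V -> Prop) g :
  implication_class E A -> (forall p, A p -> ~ within p) ->
  A g -> collapse_pair g = g -> forall f, A f -> A (collapse_pair f).
Proof.
  intros A_class A_outside Ag Hg f Af.
  assert (Hgf := implication_class_connected E E_sym A A_class g f Ag Af).
  enough (A f /\ A (collapse_pair f)) by tauto.
  clear Af; induction Hgf as [| f1 f2 _ [Af1 Acf1] Hf12] using clos_refl_trans_ind_left.
  - rewrite Hg; split; assumption.
  - assert (Gamma_closed := implication_class_Gamma_closed E A A_class).
    split; [exact (Gamma_closed f1 f2 Af1 Hf12) |].
    apply (Gamma_closed _ _ Acf1), Gamma_collapse; [assumption | ..];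
      apply A_outside; eauto.
Qed.

Lemma color_class_collapse (A : V * V -> Prop) y :
  implication_class E A -> spanned A y -> ~ X y -> spanned A x ->
  forall f, color_class A f -> color_class A (collapse_pair f).
Proof.
  intros A_class Ay Xy [c Axc].
  assert (A_outside := color_class_not_within A y A_class Ay Xy).
  assert (Xc : ~ X c) by (intro Xc; apply (A_outside _ Axc); split; assumption).
  assert (fixed : exists g, A g /\ collapse_pair g = g).
  { unfold collapse_pair; simpl.
    destruct Axc as [Axc | Acx]; [exists (x, c) | exists (c, x)]; simpl;
      rewrite (collapse_in x X_x), (collapse_out c Xc); split; trivial. }
  destruct fixed as [g [Ag Hg]].
  assert (Hcl := implication_class_collapse A g A_class
                   (fun p Ap => A_outside p (or_introl Ap)) Ag Hg).
  intros f [Af | Af]; [left | right]; exact (Hcl _ Af).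
Qed.

End Partitive.

Theorem proposition3p2 (V : Type) (E : V -> V -> Prop) (A : V * V -> Prop)
  (X : V -> Prop) :
  undirected E ->
  implication_class E A ->
  partitive E X ->
  (forall x, X x -> spanned A x) ->
  (exists y, spanned A y /\ ~ X y) ->
  exists a, spanned A a /\ ~ X a /\ forall x, X x -> color_class A (a, x).
Proof.
  intros [E_irrefl E_sym] A_class X_partitive X_spanned [y [Ay Xy]].
  destruct (classic (exists x0, X x0)) as [[x0 X_x0] | X_empty].
  2: { exists y; repeat split; trivial; intros x Xx; exfalso; eauto. }
  destruct (X_spanned x0 X_x0) as [a Ax0a]; apply color_class_swap in Ax0a.
  assert (Xa : ~ X a).
  { intro Xa; apply (color_class_not_within E X E_sym X_partitive A y A_class Ay Xy _ Ax0a).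
    split; assumption. }
  exists a; split; [exists x0; assumption | split; [assumption |]].
  intros x Xx.
  generalize (color_class_collapse E X E_irrefl E_sym X_partitive x Xx A y
                A_class Ay Xy (X_spanned x Xx) _ Ax0a); unfold collapse_pair; simpl.
  rewrite (collapse_in X x x0 X_x0), (collapse_out X x a Xa); trivial.
Qed.
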